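(* Let $f:\mathbb{R}^d\to\mathbb{R}$ be convex, and suppose there exist $\boldsymbol x^\star\in\mathbb{R}^d$, $\rho>0$ and $r>0$ such that $f$ is twice differentiable on $B(\boldsymbol x^\star,r)$ with $\nabla^2f(\boldsymbol x)\succeq\rho\boldsymbol I$ for all $\boldsymbol x\in B(\boldsymbol x^\star,r)$. Then $$f(\boldsymbol x)\ge f(\boldsymbol x^\star)+\langle\nabla f(\boldsymbol x^\star),\boldsymbol x-\boldsymbol x^\star\rangle+\rho\,H(\|\boldsymbol x-\boldsymbol x^\star\|_2),\qquad\forall\boldsymbol x\in\mathbb{R}^d,$$ where $H(x)=x^2/2$ if $0\le x\le r$ and $H(x)=r(x-r/2)$ if $x>r$.
   Context: $B(\boldsymbol x,r)$ is the closed Euclidean ball. *)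

From HB Require Import structures.
From mathcomp Require Import all_boot all_order all_algebra.
From mathcomp Require Import all_classical all_reals all_analysis.
Set Implicit Arguments. Unset Strict Implicit. Unset Printing Implicit Defensive.
Import Order.TTheory GRing.Theory Num.Theory.
Import numFieldNormedType.Exports.
Local Open Scope classical_set_scope.
Local Open Scope ring_scope.

Section Defs.
Variables (R : realType) (d : nat).
Notation V := 'rV[R]_d.

Definition dotv (u v : V) : R := \sum_(i < d) u 0 i * v 0 i.
Definition norm2 (u : V) : R := Num.sqrt (dotv u u).

Definition cball2 (c : V) (r : R) : set V := [set x | norm2 (x - c) <= r].

Definition convex_fun (f : V -> R) : Prop :=
  forall (x y : V) (t : R), 0 <= t -> t <= 1 ->
    f (t *: x + (1 - t) *: y) <= t * f x + (1 - t) * f y.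

Definition ebasis (i : 'I_d) : V := delta_mx 0 i.

Definition grad (f : V -> R) (x : V) : V := \row_i ('d f x (ebasis i)).

Definition twice_differentiable_at (f : V -> R) (x : V) : Prop :=
  (\forall y \near x, differentiable f y) /\ differentiable (grad f) x.

(* Hessian matrix: hessian f x i j = d/dx_j (d f / dx_i) (x) *)
Definition hessian (f : V -> R) (x : V) : 'M[R]_d :=
  \matrix_(i, j) ('d (grad f) x (ebasis j)) 0 i.

Definition loewner_ge_scalar (A : 'M[R]_d) (rho : R) : Prop :=
  forall v : V, rho * dotv v v <= \sum_(i < d) \sum_(j < d) v 0 i * A i j * v 0 j.

Definition Hfun (r t : R) : R :=
  if t <= r then t ^+ 2 / 2 else r * (t - r / 2).
End Defs.

From HB Require Import structures.
From mathcomp Require Import all_boot all_order all_algebra.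
From mathcomp Require Import all_classical all_reals all_analysis.
From mathcomp Require Import ring lra.
Set Implicit Arguments. Unset Strict Implicit. Unset Printing Implicit Defensive.
Import Order.TTheory GRing.Theory Num.Theory.
Import numFieldNormedType.Exports.
Local Open Scope classical_set_scope.
Local Open Scope ring_scope.

(* Restrict f to the segment g(t) = f(xs + t w), w = x - xs, s = |w|.  The
   segment stays in the ball for t <= r/s, where g'' >= rho s^2; comparing
   derivatives twice gives g(t) >= g(0) + g'(0) t + rho s^2 t^2 / 2 there.
   If s <= r this already reaches t = 1.  Otherwise g, being convex, lies
   above its tangent at t = r/s, whose slope is at least g'(0) + rho s r.
   Both cases read g(1) >= g(0) + g'(0) + rho s^2 Hfun (r/s) 1, and
   s^2 Hfun (r/s) 1 = Hfun r s. *)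

Section RealLine.
Context {R : realType}.
Implicit Types (g : R -> R) (a b t : R).

Definition convex_real_fun g : Prop :=
  forall x y l, 0 <= l -> l <= 1 ->
    g (l * x + (1 - l) * y) <= l * g x + (1 - l) * g y.

Lemma is_derive_quadratic a b t :
  is_derive t 1 (fun s : R => a * s + b / 2 * s ^+ 2) (a + b * t).
Proof.
have -> : (fun s : R => a * s + b / 2 * s ^+ 2) = a *: id + (b / 2) *: id ^+ 2.
  by apply/funext => s; rewrite !fctE.
apply: is_derive_eq.
rewrite [a%:A]mulr1 [(_ * _)%:A]mulr1 expr1.
change (a + b / 2 * (2 * t) = a + b * t).
by field.
Qed.

Lemma ler_increment_derive (F Phi dF dPhi : R -> R) a b : a <= b ->
  (forall t, a <= t <= b -> is_derive t 1 F (dF t)) ->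
  (forall t, a <= t <= b -> is_derive t 1 Phi (dPhi t)) ->
  (forall t, a < t < b -> dPhi t <= dF t) ->
  Phi b - Phi a <= F b - F a.
Proof.
rewrite le_eqVlt => /predU1P[<- | ab] dF_F dPhi_Phi le_dPhi_dF.
  by rewrite !subrr.
have dD t : a <= t <= b -> is_derive t 1 (F - Phi) (dF t - dPhi t).
  by move=> tab; exact: is_deriveB (dF_F t tab) (dPhi_Phi t tab).
have cD : {within `[a, b], continuous (F - Phi)}.
  apply: derivable_within_continuous => t; rewrite in_itv /= => /dD dt.
  exact: ex_derive.
have dD_open t : t \in `]a, b[ -> is_derive t 1 (F - Phi) (dF t - dPhi t).
  by rewrite in_itv /= => /andP[lt_at lt_tb]; apply: dD; rewrite !ltW.
have [c] := MVT ab dD_open cD.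
rewrite in_itv /= !fctE => /le_dPhi_dF le_c D_eq.
have : 0 <= (dF c - dPhi c) * (b - a) by apply: mulr_ge0; rewrite subr_ge0 // ltW.
rewrite -D_eq; lra.
Qed.

Lemma convex_slope_le g a b h : convex_real_fun g -> 0 < h -> h <= b - a ->
  h^-1 * (g (h + a) - g a) <= (g b - g a) / (b - a).
Proof.
move=> cvx h_gt0 h_le.
have ba_gt0 : 0 < b - a := lt_le_trans h_gt0 h_le.
pose l := h / (b - a).
have l_ge0 : 0 <= l by rewrite divr_ge0 ?ltW.
have l_le1 : l <= 1 by rewrite ler_pdivrMr // mul1r.
have := cvx b a l l_ge0 l_le1.
have -> : l * b + (1 - l) * a = h + a by rewrite /l; field; exact: lt0r_neq0.
move=> le_g.
have -> : (g b - g a) / (b - a) = h^-1 * (l * (g b - g a)).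
  by rewrite /l; field; rewrite !lt0r_neq0.
rewrite ler_pM2l ?invr_gt0 //; lra.
Qed.

Lemma convex_tangent_le g a b dga : convex_real_fun g -> a < b ->
  is_derive a 1 g dga -> g a + dga * (b - a) <= g b.
Proof.
move=> cvx ab dg.
have dg1 : derivable g a 1 by exact: ex_derive.
rewrite -lerBrDl -ler_pdivlMr ?subr_gt0 //.
have <- : 'D_1 g a = dga by exact: derive_val.
rewrite ['D_1 g a]cvg_at_rightE //.
apply: limr_le.
  rewrite -(cvg_at_rightE (fun h : R => h^-1 *: ((g \o shift a) _ - g a))) //.
  apply: cvg_trans dg1; apply: cvg_app.
  move=> A [e egt0 Ae]; exists e => // x xe xgt0; apply: Ae => //.
  exact/lt0r_neq0.
near=> h; rewrite [_%:A]mulr1; apply: convex_slope_le cvx _ _.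
  by near: h; exists 1 => /=.
near: h; exists (b - a); first by rewrite /= subr_gt0.
by move=> h /=; rewrite distrC subr0 => /(le_lt_trans (ler_norm _))/ltW.
Unshelve. all: by end_near.
Qed.

Lemma Hfun_lower_bound g dg d2g m T : convex_real_fun g -> 0 <= T ->
  (forall t, 0 <= t <= T -> is_derive t 1 g (dg t)) ->
  (forall t, 0 <= t <= T -> is_derive t 1 dg (d2g t)) ->
  (forall t, 0 < t < T -> m <= d2g t) ->
  g 0 + dg 0 + m * Hfun T 1 <= g 1.
Proof.
move=> cvx T_ge0 dg_g d2g_dg m_le.
have sub_T t u : t <= T -> 0 <= u <= t -> 0 <= u <= T.
  by move=> tT /andP[u0 ut]; rewrite u0 (le_trans ut).
have in_T t u : t <= T -> 0 < u < t -> 0 < u < T.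
  by move=> tT /andP[u0 ut]; rewrite u0 (lt_le_trans ut).
have dg_lower t : 0 <= t <= T -> dg 0 + m * t <= dg t.
  move=> /andP[t0 tT].
  have := ler_increment_derive t0 (fun u ut => d2g_dg u (sub_T t u tT ut))
    (fun u _ => is_derive_quadratic m 0 u).
  have le_m u : 0 < u < t -> m + 0 * u <= d2g u.
    by move=> /(in_T t u tT) /m_le; rewrite mul0r addr0.
  move=> /(_ le_m); lra.
have g_lower t : 0 <= t <= T -> g 0 + dg 0 * t + m / 2 * t ^+ 2 <= g t.
  move=> /andP[t0 tT].
  have := ler_increment_derive t0 (fun u ut => dg_g u (sub_T t u tT ut))
    (fun u _ => is_derive_quadratic (dg 0) m u).
  have le_dg u : 0 < u < t -> dg 0 + m * u <= dg u.
    by move=> /(in_T t u tT) /andP[u0 uT]; apply: dg_lower; rewrite !ltW.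
  move=> /(_ le_dg); lra.
rewrite /Hfun; have [T_ge1 | T_lt1] := leP 1 T.
  by have := g_lower 1; rewrite ler01 T_ge1 expr1n mulr1 => /(_ isT); lra.
have T_in : 0 <= T <= T by rewrite T_ge0 lexx.
have := convex_tangent_le cvx T_lt1 (dg_g T T_in).
have := g_lower T T_in.
have : (dg 0 + m * T) * (1 - T) <= dg T * (1 - T).
  by rewrite ler_wpM2r ?dg_lower // subr_ge0 ltW.
lra.
Qed.

(* [s = 0] is allowed: then [r / s = 0] and both sides vanish. *)
Lemma Hfun_scale (r s : R) : 0 <= r -> 0 <= s ->
  s ^+ 2 * Hfun (r / s) 1 = Hfun r s.
Proof.
move=> r_ge0; rewrite le_eqVlt => /predU1P[<- | s_gt0].
  by rewrite /Hfun r_ge0 expr0n /= mul0r mul0r.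
rewrite /Hfun ler_pdivlMr // mul1r; case: ifP => _; field => //; exact: lt0r_neq0.
Qed.

End RealLine.

Section Euclidean.
Context {R : realType} {d : nat}.
Notation V := 'rV[R]_d.
Implicit Types (f : V -> R) (u v w x : V) (t : R).

Lemma dotv_ge0 u : 0 <= dotv u u.
Proof. by apply: sumr_ge0 => i _; rewrite -expr2 sqr_ge0. Qed.

Lemma sqr_norm2 u : norm2 u ^+ 2 = dotv u u.
Proof. exact/sqr_sqrtr/dotv_ge0. Qed.

Lemma norm2Z t u : 0 <= t -> norm2 (t *: u) = t * norm2 u.
Proof.
move=> t_ge0; rewrite /norm2.
have -> : dotv (t *: u) (t *: u) = t ^+ 2 * dotv u u.
  by rewrite /dotv mulr_sumr; apply: eq_bigr => i _; rewrite !mxE; ring.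
by rewrite sqrtrM ?sqr_ge0 // sqrtr_sqr ger0_norm.
Qed.

Lemma dotv_grad f x w : dotv (grad f x) w = 'd f x w.
Proof.
rewrite [in RHS](row_sum_delta w) linear_sum; apply: eq_bigr => i _.
by rewrite linearZ /= mxE mulrC.
Qed.

Lemma hessian_quadformE f x v :
  \sum_(i < d) \sum_(j < d) v 0 i * hessian f x i j * v 0 j =
  dotv ('d (grad f) x v) v.
Proof.
apply: eq_bigr => i _.
rewrite [X in 'd _ _ X](row_sum_delta v) linear_sum summxE mulr_suml.
by apply: eq_bigr => j _; rewrite linearZ /= !mxE /ebasis; ring.
Qed.

Lemma is_derive_line (W : normedModType R) (h : V -> W) x w t :
  differentiable h (x + t *: w) ->
  is_derive t 1 (fun s => h (x + s *: w)) ('d h (x + t *: w) w).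
Proof.
move=> dh; pose p s := x + s *: w.
have dp : is_derive t 1 p w.
  have dZ : is_derive t 1 ( *:%R^~ w) (1 *: w).
    by apply: DeriveDef; [exact: diff_derivable | rewrite deriveE // diff_val].
  by have := is_deriveD (is_derive_cst x t 1) dZ; rewrite add0r scale1r.
have p_diff : differentiable p t by apply/derivable1_diffP; exact: ex_derive.
apply: DeriveDef; first exact/diff_derivable/differentiable_comp.
rewrite deriveE; last exact: differentiable_comp.
by rewrite diff_comp // /= -(deriveE _ p_diff); case: dp => _ ->.
Qed.

Lemma is_derive_dotvl (u : R -> V) v du t :
  is_derive t 1 u du -> is_derive t 1 (fun s => dotv (u s) v) (dotv du v).
Proof.
move=> u_du.
have u_du_i i : is_derive t 1 (fun s => u s 0 i) (du 0 i).
  have u_der : derivable u t 1 by exact: ex_derive.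
  apply: DeriveDef; first by move/derivable_mxP: u_der.
  have := derive_mx u_der; rewrite (derive_val (f := u)) => ->.
  by rewrite mxE.
have -> : (fun s => dotv (u s) v) = \sum_(i < d) v 0 i *: (fun s => u s 0 i).
  by apply/funext => s; rewrite fct_sumE; apply: eq_bigr => i _; rewrite mulrC.
apply: is_derive_eq (is_derive_sum (fun i => is_deriveZ (v 0 i) (u_du_i i))) _.
by apply: eq_bigr => i _; rewrite mulrC.
Qed.

Lemma convex_fun_line f x w :
  convex_fun f -> convex_real_fun (fun t => f (x + t *: w)).
Proof.
move=> cvx y z l l_ge0 l_le1.
have -> : x + (l * y + (1 - l) * z) *: w =
    l *: (x + y *: w) + (1 - l) *: (x + z *: w).
  rewrite scalerDl !scalerDr !scalerA addrACA -[l *: x + _]scalerDl.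
  by rewrite subrKC scale1r.
exact: cvx.
Qed.

End Euclidean.

Theorem lemmaE5 (R : realType) (d : nat) (f : 'rV[R]_d -> R)
    (xs : 'rV[R]_d) (rho r : R) :
  convex_fun f -> 0 < rho -> 0 < r ->
  (forall x, cball2 xs r x -> twice_differentiable_at f x) ->
  (forall x, cball2 xs r x -> loewner_ge_scalar (hessian f x) rho) ->
  forall x : 'rV[R]_d,
    f xs + dotv (grad f xs) (x - xs) + rho * Hfun r (norm2 (x - xs)) <= f x.
Proof.
(* The argument never uses [0 < rho]. *)
move=> cvx _ r_gt0 f_C2 hess_ge x.
set w := x - xs; set s := norm2 w; pose p t := xs + t *: w.
have s_ge0 : 0 <= s := sqrtr_ge0 _.
have p_ball t : 0 <= t <= r / s -> cball2 xs r (p t).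
  move=> /andP[t_ge0 t_le]; rewrite /cball2 /= /p addrAC subrr add0r norm2Z // -/s.
  have [-> | s_neq0] := eqVneq s 0; first by rewrite mulr0 ltW.
  by rewrite -ler_pdivlMr // lt_def s_neq0.
have := Hfun_lower_bound (g := f \o p) (dg := fun t => dotv (grad f (p t)) w)
  (d2g := fun t => dotv ('d (grad f) (p t) w) w) (m := rho * s ^+ 2) (T := r / s).
have [p0 p1] : p 0 = xs /\ p 1 = x by rewrite /p scale0r addr0 scale1r subrKC.
rewrite /comp p0 p1 -[rho * s ^+ 2 * _]mulrA (Hfun_scale (ltW r_gt0) s_ge0).
apply.
- exact: convex_fun_line.
- by rewrite divr_ge0 // ltW.
- move=> t /p_ball /f_C2 [/nbhs_singleton f_diff _].
  by rewrite dotv_grad; exact: is_derive_line.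
- move=> t /p_ball /f_C2 [_ grad_diff].
  exact/is_derive_dotvl/is_derive_line.
- move=> t /andP[t_gt0 t_lt]; rewrite -hessian_quadformE sqr_norm2.
  by apply: hess_ge; apply: p_ball; rewrite !ltW.
Qed.
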